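(* Let $n\ge 1$. For $a\in\{0,1\}$ let $\lvert \hat a\rangle=\frac{1}{\sqrt2}(\lvert 0\rangle+(-1)^a\lvert 1\rangle)$. For bits $r_0,r_1,s\in\{0,1\}$ define the two-qubit state on qubits $A_0A_1$ $$\lvert\psi^{s}_{r_0r_1}\rangle_{A_0A_1}=\lvert r_0\rangle_{A_s}\otimes\lvert \hat r_1\rangle_{A_{\bar s}},$$ and for strings $\mathbf r_0,\mathbf r_1,\mathbf s\in\{0,1\}^n$ (with $j$-th entries $r_0^j,r_1^j,s^j$) define the $2n$-qubit state $\lvert\Psi^{\mathbf s}_{\mathbf r_0\mathbf r_1}\rangle_A=\bigotimes_{j=1}^n\lvert\psi^{s^j}_{r_0^jr_1^j}\rangle_{A_0^jA_1^j}$, where $A=A_0^1A_1^1\cdots A_0^nA_1^n$. Consider any (cheating) strategy consisting of: a finite-dimensional ancilla $E$ in a fixed pure state $\lvert\chi\rangle_E$; a unitary $U$ on $AE$, where $AE=B_0B_1B'$ is decomposed into three finite-dimensional subsystems; a projective measurement $\{R^{b'}\}_{b'\in\{0,1\}}$ on $B'$; and, for each $i\in\{0,1\}$, $\mathbf s\in\{0,1\}^n$, $b'\in\{0,1\}$, a projective measurement $\{\Pi^{\mathbf e}_{i\mathbf s b'}\}_{\mathbf e\in\{0,1\}^n}$ on $B_i$. Let $\lvert\Phi^{\mathbf s}_{\mathbf r_0\mathbf r_1}\rangle_{B_0B_1B'}=U(\lvert\Psi^{\mathbf s}_{\mathbf r_0\mathbf r_1}\rangle_A\otimes\lvert\chi\rangle_E)$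 and $$p_n=\frac{1}{2^{3n}}\sum_{\mathbf r_0,\mathbf r_1,\mathbf s\in\{0,1\}^n}\ \sum_{b'\in\{0,1\}}\langle\Phi^{\mathbf s}_{\mathbf r_0\mathbf r_1}\rvert\,\Pi^{\mathbf r_{b'}}_{0\mathbf s b'}\otimes\Pi^{\mathbf r_{\bar b'}}_{1\mathbf s b'}\otimes R^{b'}\,\lvert\Phi^{\mathbf s}_{\mathbf r_0\mathbf r_1}\rangle,$$ where $\bar b'=b'\oplus1$. Then for every such strategy, $$p_n\le\Bigl(\frac12+\frac{1}{2\sqrt2}\Bigr)^n.$$
   Context: $p_n$ is the probability that Bob, in a spacetime-constrained oblivious transfer protocol, simultaneously outputs $\mathbf r_{b'}$ from system $B_0$ and $\mathbf r_{\bar b'}$ from system $B_1$, when $\mathbf r_0,\mathbf r_1,\mathbf s$ are uniformly random and Bob receives $\lvert\Psi^{\mathbf s}_{\mathbf r_0\mathbf r_1}\rangle$; the measurements on $B_i$ may depend on $\mathbf s$ and on the outcome $b'$ of the measurement on $B'$. $\oplus$ is addition modulo 2. *)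

From HB Require Import structures.
From mathcomp Require Import all_boot all_order all_algebra.
From mathcomp Require Import reals complex.
Set Implicit Arguments. Unset Strict Implicit. Unset Printing Implicit Defensive.
Import Order.TTheory GRing.Theory Num.Theory.
Local Open Scope ring_scope.
Local Open Scope complex_scope.

Definition bits (n : nat) := {ffun 'I_n -> bool}.
(* computational basis of A = A_0^1 A_1^1 ... A_0^n A_1^n :
   for each j, the pair (value on A_0^j, value on A_1^j) *)
Definition Abasis (n : nat) := {ffun 'I_n -> bool * bool}.

Section Quantum.
Variable R : realType.
Local Notation C := R[i].

Definition ket_comp (a x : bool) : C := (x == a)%:R.
Definition ket_hat (a x : bool) : C :=
  ((Num.sqrt (2 : R))^-1)%:C * (if x then (-1) ^+ a else 1).

(* |psi^s_{r0 r1}>_{A0 A1} = |r0>_{A_s} (x) |\hat r1>_{A_{\bar s}};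
   q = (value on A0, value on A1) *)
Definition psi (s r0 r1 : bool) (q : bool * bool) : C :=
  if s then ket_comp r0 q.2 * ket_hat r1 q.1
  else ket_comp r0 q.1 * ket_hat r1 q.2.

Definition Psi (n : nat) (s r0 r1 : bits n) (a : Abasis n) : C :=
  \prod_(j < n) psi (s j) (r0 j) (r1 j) (a j).

(* vectors are functions T -> C on a finite basis, operators are
   matrices T -> T -> C  (M x y = <x|M|y>) *)
Definition is_unit_vector (T : finType) (v : T -> C) : Prop :=
  \sum_(x : T) (v x)^* * v x = 1.

Definition is_unitary_op (TA TB : finType) (U : TB -> TA -> C) : Prop :=
  (forall x y : TA, \sum_(b : TB) (U b x)^* * U b y = (x == y)%:R) /\
  (forall b c : TB, \sum_(x : TA) U b x * (U c x)^* = (b == c)%:R).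

Definition is_proj_meas (I T : finType) (P : I -> T -> T -> C) : Prop :=
  (forall i x y, P i y x = (P i x y)^*) /\
  (forall i x y, \sum_(z : T) P i x z * P i z y = P i x y) /\
  (forall x y, \sum_(i : I) P i x y = (x == y)%:R).

Definition Phi (n dE d0 d1 d' : nat) (chi : 'I_dE -> C)
  (U : 'I_d0 * 'I_d1 * 'I_d' -> Abasis n * 'I_dE -> C)
  (s r0 r1 : bits n) (b : 'I_d0 * 'I_d1 * 'I_d') : C :=
  \sum_(ae : Abasis n * 'I_dE) U b ae * (Psi s r0 r1 ae.1 * chi ae.2).

Definition success_prob (n dE d0 d1 d' : nat) (chi : 'I_dE -> C)
  (U : 'I_d0 * 'I_d1 * 'I_d' -> Abasis n * 'I_dE -> C)
  (Rm : bool -> 'I_d' -> 'I_d' -> C)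
  (Pi0 : bits n -> bool -> bits n -> 'I_d0 -> 'I_d0 -> C)
  (Pi1 : bits n -> bool -> bits n -> 'I_d1 -> 'I_d1 -> C) : C :=
  (2 ^+ (3 * n))^-1 *
  \sum_(r0 : bits n) \sum_(r1 : bits n) \sum_(s : bits n) \sum_(b' : bool)
    let rb := if b' then r1 else r0 in
    let rnb := if b' then r0 else r1 in
    \sum_(b : 'I_d0 * 'I_d1 * 'I_d') \sum_(c : 'I_d0 * 'I_d1 * 'I_d')
      (Phi chi U s r0 r1 b)^* *
      (Pi0 s b' rb b.1.1 c.1.1 * Pi1 s b' rnb b.1.2 c.1.2 * Rm b' b.2 c.2) *
      Phi chi U s r0 r1 c.

End Quantum.

(* Let [phi = sum_a |a> (x) U (|a> (x) |chi>)], where the first factor is a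
   reference copy of [A]. As the states [Psi^s_(r0 r1)] are real,
   [p_n = 8^-n sum_s <phi| Pi_s |phi>] with [Pi_s] the projector onto Bob
   winning for the basis choice [s]. Now [Pi_s] is dominated by a projector
   that only tests the output of [B0] against the qubits of [A], and [Pi_t] by
   one that only tests [B1]. Wherever [s] and [t] differ, these tests read the
   same qubit in conjugate bases, so the product of the two dominating
   projectors has norm at most [c(s,t) = 2^(-d(s,t)/2)], with [d] the Hamming
   distance. A Schur-test argument gives
   [sum_s <phi| Pi_s |phi> <= (max_s sum_t c(s,t)) |phi|^2 = (1 + 1/sqrt 2)^n 4^n]. *)

From HB Require Import structures.
From mathcomp Require Import all_boot all_order all_algebra.
From mathcomp Require Import reals complex ring.
From Stdlib Require Import FunctionalExtensionality.
Set Implicit Arguments. Unset Strict Implicit. Unset Printing Implicit Defensive.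
Import Order.TTheory GRing.Theory Num.Theory.
Local Open Scope ring_scope.

(** * Operators on finite-dimensional spaces *)

Section Operators.
Variable C : numClosedFieldType.

Definition op (T : finType) := T -> T -> C.

Definition inner (T : finType) (u v : T -> C) : C := \sum_x (u x)^* * v x.
Definition apply_op (T : finType) (M : op T) (u : T -> C) : T -> C :=
  fun x => \sum_y M x y * u y.
Definition mul_op (T : finType) (M N : op T) : op T :=
  fun x z => \sum_y M x y * N y z.
Definition id_op (T : finType) : op T := fun x y => (x == y)%:R.
Definition zero_op (T : finType) : op T := fun _ _ => 0.
Definition scale_op (T : finType) (c : C) (M : op T) : op T :=
  fun x y => c * M x y.
Definition sum_op (I T : finType) (F : I -> op T) : op T :=
  fun x y => \sum_i F i x y.
Definition tensor_op (T1 T2 : finType) (M : op T1) (N : op T2) : op (T1 * T2)%type :=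
  fun x y => M x.1 y.1 * N x.2 y.2.

Definition sqnorm_le (T : finType) (M : op T) (c : C) :=
  forall w, inner (apply_op M w) (apply_op M w) <= c * inner w w.

Definition selfadjoint (T : finType) (M : op T) := forall x y, M y x = (M x y)^*.
Definition projector (T : finType) (M : op T) := selfadjoint M /\ mul_op M M = M.

Lemma op_ext (T : finType) (M N : op T) : (forall x y, M x y = N x y) -> M = N.
Proof. by move=> e; do 2![apply: functional_extensionality => ?]; apply: e. Qed.

Lemma sum_delta_l (I : finType) (j : I) (F : I -> C) :
  \sum_i (i == j)%:R * F i = F j.
Proof.
rewrite (bigD1 j) //= eqxx mul1r big1 ?addr0 // => i /negPf ->; exact: mul0r.
Qed.

Lemma sum_delta_r (I : finType) (j : I) (F : I -> C) :
  \sum_i (j == i)%:R * F i = F j.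
Proof. by under eq_bigr do rewrite eq_sym; apply: sum_delta_l. Qed.

Lemma natr_andb (a b : bool) : ((a && b)%:R : C) = a%:R * b%:R.
Proof. by case: a; case: b; rewrite ?mulr1 ?mulr0. Qed.

Lemma sum_pair (T1 T2 : finType) (F : T1 * T2 -> C) :
  \sum_p F p = \sum_a \sum_b F (a, b).
Proof. by rewrite pair_bigA; apply: eq_bigr => -[]. Qed.

Section Inner.
Variable T : finType.
Implicit Types u v w : T -> C.

Lemma innerDr u v w (a b : C) :
  inner u (fun x => a * v x + b * w x) = a * inner u v + b * inner u w.
Proof. rewrite /inner !mulr_sumr -big_split; apply: eq_bigr => x _ /=; ring. Qed.

Lemma innerDl u v w (a b : C) :
  inner (fun x => a * v x + b * w x) u = a^* * inner v u + b^* * inner w u.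
Proof.
rewrite /inner !mulr_sumr -big_split; apply: eq_bigr => x _ /=.
rewrite rmorphD !rmorphM /=; ring.
Qed.

Lemma innerZr u v (c : C) : inner u (fun x => c * v x) = c * inner u v.
Proof. by rewrite /inner mulr_sumr; apply: eq_bigr => x _; rewrite mulrCA. Qed.

Lemma innerC u v : inner v u = (inner u v)^*.
Proof.
rewrite /inner rmorph_sum; apply: eq_bigr => x _.
by rewrite rmorphM /= conjCK mulrC.
Qed.

Lemma inner_sumr (I : finType) u (F : I -> T -> C) :
  inner u (fun x => \sum_i F i x) = \sum_i inner u (F i).
Proof. by rewrite /inner exchange_big; apply: eq_bigr => x _; rewrite mulr_sumr. Qed.

Lemma inner_suml (I : finType) u (F : I -> T -> C) :
  inner (fun x => \sum_i F i x) u = \sum_i inner (F i) u.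
Proof.
rewrite innerC inner_sumr rmorph_sum; apply: eq_bigr => i _; exact/esym/innerC.
Qed.

Lemma inner_ge0 u : 0 <= inner u u.
Proof. by apply: sumr_ge0 => x _; rewrite mulrC mul_conjC_ge0. Qed.

Lemma inner_eq0 u : inner u u = 0 -> forall x, u x = 0.
Proof.
move=> /eqP; rewrite psumr_eq0 => [/allP u0 x|x _]; last first.
  by rewrite mulrC mul_conjC_ge0.
by apply/eqP; rewrite -mul_conjC_eq0 mulrC; exact: u0 (mem_index_enum x).
Qed.

Lemma CauchySchwarz u v : `|inner u v| ^+ 2 <= inner u u * inner v v.
Proof.
have [uu0|uu_neq0] := eqVneq (inner u u) 0.
  have u0 := inner_eq0 uu0.
  rewrite uu0 mul0r /inner big1 ?normr0 ?expr0n // => x _.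
  by rewrite u0 conjC0 mul0r.
have uu_gt0 : 0 < inner u u by rewrite lt_def uu_neq0 inner_ge0.
(* the squared norm of [<u,u> v - <u,v> u] is nonnegative *)
have := inner_ge0 (fun x => inner u u * v x + - inner u v * u x).
rewrite innerDl !innerDr (innerC u v) (conj_Creal (ger0_real (inner_ge0 u))).
rewrite normCK rmorphN /=.
set a := inner u u; set b := inner u v; set c := inner v v.
have -> : a * (a * c + - b * b^*) + - b^* * (a * b + - b * a) =
          a * (a * c - b * b^*) by ring.
by rewrite pmulr_rge0 // subr_ge0 mulrC.
Qed.

End Inner.

Section Algebra.
Variable T : finType.
Implicit Types u v : T -> C.
Implicit Types M N P : op T.

Lemma apply_mul_op M N u : apply_op (mul_op M N) u = apply_op M (apply_op N u).
Proof.
apply: functional_extensionality => x; rewrite /apply_op /mul_op.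
under eq_bigr do rewrite mulr_suml.
rewrite exchange_big; apply: eq_bigr => y _; rewrite mulr_sumr.
by apply: eq_bigr => z _; rewrite mulrA.
Qed.

Lemma mul1op M : mul_op (@id_op T) M = M.
Proof. by apply: op_ext => x z; rewrite /mul_op sum_delta_r. Qed.

Lemma mulop1 M : mul_op M (@id_op T) = M.
Proof.
by apply: op_ext => x z; rewrite /mul_op; under eq_bigr do rewrite mulrC; rewrite sum_delta_l.
Qed.

Lemma apply_id_op u : apply_op (@id_op T) u = u.
Proof. by apply: functional_extensionality => x; rewrite /apply_op sum_delta_r. Qed.

Lemma scale_op0 M : scale_op 0 M = @zero_op T.
Proof. by apply: op_ext => x y; rewrite /scale_op mul0r. Qed.

Lemma scale_op1 M : scale_op 1 M = M.
Proof. by apply: op_ext => x y; rewrite /scale_op mul1r. Qed.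

Lemma scale_opA a b M : scale_op a (scale_op b M) = scale_op (a * b) M.
Proof. by apply: op_ext => x y; rewrite /scale_op mulrA. Qed.

Lemma apply_scale_op c M u : apply_op (scale_op c M) u = fun x => c * apply_op M u x.
Proof.
apply: functional_extensionality => x; rewrite /apply_op /scale_op mulr_sumr.
by apply: eq_bigr => y _; rewrite mulrA.
Qed.

Lemma eq_sum_op (I : finType) (F G : I -> op T) :
  (forall i, F i = G i) -> sum_op F = sum_op G.
Proof. by move=> FG; congr sum_op; apply: functional_extensionality. Qed.

Lemma apply_sum_op (I : finType) (F : I -> op T) u :
  apply_op (sum_op F) u = fun x => \sum_i apply_op (F i) u x.
Proof.
apply: functional_extensionality => x; rewrite /apply_op /sum_op.
by under eq_bigr do rewrite mulr_suml; rewrite exchange_big.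
Qed.

Lemma mul_sum_opl (I : finType) (F : I -> op T) N :
  mul_op (sum_op F) N = sum_op (fun i => mul_op (F i) N).
Proof.
apply: op_ext => x z; rewrite /mul_op /sum_op.
by under eq_bigr do rewrite mulr_suml; rewrite exchange_big.
Qed.

Lemma mul_sum_opr (I : finType) (F : I -> op T) M :
  mul_op M (sum_op F) = sum_op (fun i => mul_op M (F i)).
Proof.
apply: op_ext => x z; rewrite /mul_op /sum_op.
by under eq_bigr do rewrite mulr_sumr; rewrite exchange_big.
Qed.

Lemma mul_sum_op (I J : finType) (F : I -> op T) (G : J -> op T) :
  mul_op (sum_op F) (sum_op G) = sum_op (fun k : I * J => mul_op (F k.1) (G k.2)).
Proof.
rewrite mul_sum_opl; apply: op_ext => x y.
by rewrite /sum_op sum_pair; apply: eq_bigr => i _; rewrite mul_sum_opr.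
Qed.

Lemma selfadjoint_id_op : selfadjoint (@id_op T).
Proof. by move=> x y; rewrite /id_op eq_sym conjC_nat. Qed.

Lemma projector_id_op : projector (@id_op T).
Proof. by split; [exact: selfadjoint_id_op | exact: mul1op]. Qed.

Lemma selfadjoint_sum_op (I : finType) (F : I -> op T) :
  (forall i, selfadjoint (F i)) -> selfadjoint (sum_op F).
Proof. by move=> hF x y; rewrite /sum_op rmorph_sum; apply: eq_bigr => i _; apply: hF. Qed.

Lemma inner_selfadjoint M u v : selfadjoint M ->
  inner (apply_op M u) v = inner u (apply_op M v).
Proof.
move=> hM; rewrite /inner /apply_op.
under eq_bigr do rewrite rmorph_sum mulr_suml.
rewrite exchange_big; apply: eq_bigr => y _; rewrite mulr_sumr.
by apply: eq_bigr => x _; rewrite rmorphM /= -hM mulrCA mulrA.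
Qed.

Lemma inner_projector P u : projector P ->
  inner (apply_op P u) (apply_op P u) = inner u (apply_op P u).
Proof. by case=> hP idP; rewrite inner_selfadjoint // -apply_mul_op idP. Qed.

Lemma projector_contraction P u : projector P ->
  inner (apply_op P u) (apply_op P u) <= inner u u.
Proof.
move=> prP; rewrite inner_projector // -subr_ge0.
set w := fun x => 1 * u x + (-1) * apply_op P u x.
suff -> : inner u u - inner u (apply_op P u) = inner w w by apply: inner_ge0.
rewrite innerDl !innerDr inner_projector // inner_selfadjoint; last by case: prP.
by rewrite rmorph1 rmorphN1; ring.
Qed.

(* [z = P_j w] is fixed by [P_j]; as the [|P_k z|^2] add up to [|z|^2], all
   the other components [P_i z] vanish. *)
Lemma projector_resolution_orthogonal (I : finType) (P : I -> op T) :
  (forall i, projector (P i)) -> sum_op P = @id_op T ->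
  forall i j, mul_op (P i) (P j) = scale_op (i == j)%:R (P j).
Proof.
move=> prP sumP i j; have [<-|nij] := eqVneq i j.
  by case: (prP i) => _ ->; rewrite scale_op1.
rewrite scale_op0; apply: op_ext => x y.
set w : T -> C := fun z => (z == y)%:R.
have -> : mul_op (P i) (P j) x y = apply_op (P i) (apply_op (P j) w) x.
  by rewrite -apply_mul_op /apply_op /w; under eq_bigr do rewrite mulrC; rewrite sum_delta_l.
set z := apply_op (P j) w.
have Pjz : apply_op (P j) z = z by rewrite /z -apply_mul_op; case: (prP j) => _ ->.
have zz : inner z z = \sum_k inner (apply_op (P k) z) (apply_op (P k) z).
  rewrite -{2}[z]apply_id_op -sumP apply_sum_op inner_sumr.
  by apply: eq_bigr => k _; rewrite inner_projector.
rewrite (bigD1 j) //= Pjz -[LHS]addr0 in zz; move/addrI/esym/eqP: zz.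
rewrite psumr_eq0 => [/allP Pz0|k _]; last exact: inner_ge0.
by apply: inner_eq0; apply/eqP; have := Pz0 i (mem_index_enum i); rewrite nij.
Qed.

End Algebra.

Section Geometry.
Variable T : finType.
Implicit Types u v : T -> C.
Implicit Types P Q X Y : op T.

Lemma inner_apply_orthogonal P Q u v : selfadjoint P ->
  mul_op P Q = @zero_op T -> inner (apply_op P u) (apply_op Q v) = 0.
Proof.
move=> hP PQ0; rewrite inner_selfadjoint // -apply_mul_op PQ0 /inner big1 // => x _.
by rewrite /apply_op big1 ?mulr0 // => y _; rewrite mul0r.
Qed.

Lemma inner_sum_orthogonal (I : finType) (y : I -> T -> C) :
  (forall i j, i != j -> inner (y i) (y j) = 0) ->
  inner (fun x => \sum_i y i x) (fun x => \sum_i y i x) = \sum_i inner (y i) (y i).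
Proof.
move=> yy0; rewrite inner_suml; apply: eq_bigr => i _.
rewrite inner_sumr (bigD1 i) //= big1 ?addr0 // => j; rewrite eq_sym; exact: yy0.
Qed.

Lemma sqnorm_le_mul_projectors P Q D c : projector P -> selfadjoint Q ->
  projector D -> 0 <= c -> mul_op Q (mul_op P Q) = scale_op c D ->
  sqnorm_le (mul_op P Q) c.
Proof.
move=> prP hQ prD c0 QPQ w.
rewrite apply_mul_op inner_projector // inner_selfadjoint //.
rewrite -[apply_op P _]apply_mul_op -apply_mul_op QPQ apply_scale_op innerZr -inner_projector //.
by rewrite ler_wpM2l // projector_contraction.
Qed.

Lemma inner_fixed_points_bound X Y u v c : selfadjoint X ->
  apply_op X u = u -> apply_op Y v = v ->
  sqnorm_le (mul_op X Y) c -> `|inner u v| ^+ 2 <= c * inner u u * inner v v.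
Proof.
move=> hX Xu Yv XY.
have -> : inner u v = inner u (apply_op (mul_op X Y) v).
  by rewrite apply_mul_op -inner_selfadjoint // Xu Yv.
apply: le_trans (CauchySchwarz _ _) _.
by apply: le_trans (ler_wpM2l (inner_ge0 u) (XY v)) _; rewrite mulrCA mulrA.
Qed.

End Geometry.

Section Tensor.
Variables T1 T2 : finType.
Implicit Types M : op T1.
Implicit Types N : op T2.

Lemma mul_tensor_op M M' N N' :
  mul_op (tensor_op M N) (tensor_op M' N') = tensor_op (mul_op M M') (mul_op N N').
Proof.
apply: op_ext => x z; rewrite /mul_op /tensor_op sum_pair /= mulr_suml.
by apply: eq_bigr => a _; rewrite mulr_sumr; apply: eq_bigr => b _ /=; ring.
Qed.

Lemma selfadjoint_tensor_op M N : selfadjoint M -> selfadjoint N -> selfadjoint (tensor_op M N).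
Proof. by move=> hM hN x y; rewrite /tensor_op rmorphM /= -hM -hN. Qed.

Lemma projector_tensor_op M N : projector M -> projector N -> projector (tensor_op M N).
Proof.
case=> hM MM [hN NN]; split; first exact: selfadjoint_tensor_op.
by rewrite mul_tensor_op MM NN.
Qed.

Lemma tensor_opZl c M N : tensor_op (scale_op c M) N = scale_op c (tensor_op M N).
Proof. by apply: op_ext => x z; rewrite /tensor_op /scale_op mulrA. Qed.

Lemma tensor_opZr c M N : tensor_op M (scale_op c N) = scale_op c (tensor_op M N).
Proof. by apply: op_ext => x z; rewrite /tensor_op /scale_op mulrCA. Qed.

Lemma tensor0op N : tensor_op (@zero_op T1) N = @zero_op (T1 * T2)%type.
Proof. by apply: op_ext => x y; rewrite /tensor_op mul0r. Qed.

Lemma tensorop0 M : tensor_op M (@zero_op T2) = @zero_op (T1 * T2)%type.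
Proof. by apply: op_ext => x y; rewrite /tensor_op mulr0. Qed.

Lemma tensor_sum_opr (I : finType) (F : I -> op T2) M :
  tensor_op M (sum_op F) = sum_op (fun i => tensor_op M (F i)).
Proof. by apply: op_ext => x z; rewrite /tensor_op /sum_op mulr_sumr. Qed.

Lemma tensor_id_op : tensor_op (@id_op T1) (@id_op T2) = @id_op (T1 * T2)%type.
Proof.
by apply: op_ext => -[x1 x2] [z1 z2]; rewrite /tensor_op /id_op xpair_eqE natr_andb.
Qed.

Lemma inner_pair (u v : T1 * T2 -> C) :
  inner u v = \sum_b inner (fun a => u (a, b)) (fun a => v (a, b)).
Proof. by rewrite /inner sum_pair exchange_big. Qed.

Lemma sqnorm_le_tensor_id_op M c :
  sqnorm_le M c -> sqnorm_le (tensor_op M (@id_op T2)) c.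
Proof.
move=> Mc z; have slice b : (fun a => apply_op (tensor_op M (@id_op T2)) z (a, b)) =
                          apply_op M (fun a => z (a, b)).
  apply: functional_extensionality => a; rewrite /apply_op sum_pair.
  apply: eq_bigr => a' _; rewrite /tensor_op /id_op /= (bigD1 b) //= eqxx mulr1.
  by rewrite big1 ?addr0 // => b' /negPf; rewrite eq_sym => ->; rewrite mulr0 mul0r.
rewrite !(inner_pair (apply_op _ _)) inner_pair mulr_sumr; apply: ler_sum => b _.
by rewrite slice.
Qed.

Lemma sqnorm_le_block_diagonal (I : finType) (M : I -> op T1) (K : I -> op T2) c :
  0 <= c -> (forall i, projector (K i)) -> sum_op K = @id_op T2 ->
  (forall i, sqnorm_le (M i) c) ->
  sqnorm_le (sum_op (fun i => tensor_op (M i) (K i))) c.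
Proof.
move=> c0 prK sumK Mc z.
pose Q i := tensor_op (@id_op T1) (K i).
have prQ i : projector (Q i) by apply: projector_tensor_op; [exact: projector_id_op|].
have MK_QM i : tensor_op (M i) (K i) = mul_op (Q i) (tensor_op (M i) (@id_op T2)).
  by rewrite mul_tensor_op mul1op mulop1.
have MK_MQ i : tensor_op (M i) (K i) = mul_op (tensor_op (M i) (@id_op T2)) (Q i).
  by rewrite mul_tensor_op mul1op mulop1.
rewrite apply_sum_op inner_sum_orthogonal => [|i j ij]; last first.
  rewrite !MK_QM !apply_mul_op inner_apply_orthogonal //; first by case: (prQ i).
  rewrite /Q mul_tensor_op mul1op (projector_resolution_orthogonal prK sumK).
  by rewrite (negPf ij) scale_op0 tensorop0.
apply: le_trans (_ : \sum_i c * inner (apply_op (Q i) z) (apply_op (Q i) z) <= _).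
  by apply: ler_sum => i _; rewrite MK_MQ apply_mul_op sqnorm_le_tensor_id_op.
rewrite -mulr_sumr ler_wpM2l //; under eq_bigr do rewrite inner_projector //.
rewrite -inner_sumr -apply_sum_op /Q -tensor_sum_opr sumK tensor_id_op apply_id_op.
exact: lexx.
Qed.

End Tensor.

Lemma mul_sum_op_selector (I J T : finType) (G : J -> op T) (F : I -> op T)
    (sel : I -> J) :
  (forall j i, mul_op (G j) (F i) = scale_op (j == sel i)%:R (F i)) ->
  mul_op (sum_op G) (sum_op F) = sum_op F.
Proof.
move=> GF; rewrite mul_sum_op; apply: op_ext => x y.
rewrite /sum_op sum_pair exchange_big; apply: eq_bigr => i _ /=.
by under eq_bigr do rewrite GF /scale_op; rewrite sum_delta_l.
Qed.

Lemma projector_sum_op (I T : finType) (F : I -> op T) :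
  (forall i, selfadjoint (F i)) ->
  (forall j i, mul_op (F j) (F i) = scale_op (j == i)%:R (F i)) -> projector (sum_op F).
Proof.
move=> hF FF; split; first exact: selfadjoint_sum_op.
exact: (@mul_sum_op_selector _ _ _ _ _ id).
Qed.

Lemma inner_rank_one_tensor (T1 T2 : finType) (v : T1 -> C) (K : op T2)
    (phi : T1 * T2 -> C) : (forall a, (v a)^* = v a) ->
  inner phi (apply_op (tensor_op (fun a a' => v a * v a') K) phi) =
  \sum_b \sum_c (\sum_a v a * phi (a, b))^* * K b c * (\sum_a v a * phi (a, c)).
Proof.
move=> v_real; rewrite /inner /apply_op sum_pair.
under eq_bigr do under eq_bigr do rewrite sum_pair mulr_sumr.
under eq_bigr do under eq_bigr do under eq_bigr do rewrite mulr_sumr.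
rewrite exchange_big; apply: eq_bigr => b _.
under eq_bigr do rewrite exchange_big.
rewrite exchange_big; apply: eq_bigr => c _.
rewrite rmorph_sum !mulr_suml; apply: eq_bigr => a _.
rewrite mulr_sumr; apply: eq_bigr => a' _.
rewrite /tensor_op /= rmorphM /= v_real; ring.
Qed.

Section TensorPower.
Variables (n : nat) (Q : finType).

Definition bigtensor_op (L : 'I_n -> op Q) : op {ffun 'I_n -> Q} :=
  fun a a' => \prod_j L j (a j) (a' j).

Lemma eq_bigtensor_op (L L' : 'I_n -> op Q) :
  (forall j, L j = L' j) -> bigtensor_op L = bigtensor_op L'.
Proof. by move=> LL'; congr bigtensor_op; apply: functional_extensionality. Qed.

Lemma mul_bigtensor_op (L L' : 'I_n -> op Q) :
  mul_op (bigtensor_op L) (bigtensor_op L') = bigtensor_op (fun j => mul_op (L j) (L' j)).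
Proof.
apply: op_ext => a a'; rewrite /mul_op /bigtensor_op /=.
by under eq_bigr do rewrite -big_split /=; rewrite bigA_distr_bigA.
Qed.

Lemma bigtensor_opZ (c : 'I_n -> C) (L : 'I_n -> op Q) :
  bigtensor_op (fun j => scale_op (c j) (L j)) = scale_op (\prod_j c j) (bigtensor_op L).
Proof. by apply: op_ext => a a'; rewrite /bigtensor_op /scale_op -big_split. Qed.

Lemma projector_bigtensor_op (L : 'I_n -> op Q) :
  (forall j, projector (L j)) -> projector (bigtensor_op L).
Proof.
move=> prL; split=> [a a'|].
  by rewrite /bigtensor_op rmorph_prod; apply: eq_bigr => j _; case: (prL j).
rewrite mul_bigtensor_op; congr bigtensor_op.
by apply: functional_extensionality => j; case: (prL j).
Qed.

Lemma prod_natr_eq (T : finType) (a b : {ffun 'I_n -> T}) :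
  \prod_j ((a j == b j)%:R : C) = (a == b)%:R.
Proof.
have [->|nab] := eqVneq a b; first by rewrite big1 // => j _; rewrite eqxx.
have [j nabj] : exists j, a j != b j.
  apply/existsP; apply: contraT; rewrite negb_exists => /forallP ab.
  by case/eqP: nab; apply/ffunP => j; apply/eqP/negbNE/ab.
by rewrite (bigD1 j) //= (negPf nabj) mul0r.
Qed.

End TensorPower.

Lemma normr_le_mean (z a b c : C) : 0 <= a -> 0 <= b -> 0 <= c ->
  `|z| ^+ 2 <= c ^+ 2 * a * b -> `|z| <= c * (a + b) / 2.
Proof.
move=> a0 b0 c0 zab.
have mean0 : 0 <= c * (a + b) / 2 by rewrite divr_ge0 // mulr_ge0 // addr_ge0.
rewrite -ler_sqr ?nnegrE //; apply: le_trans zab _.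
have -> : (c * (a + b) / 2) ^+ 2 = c ^+ 2 * a * b + c ^+ 2 * ((a - b) / 2) ^+ 2.
  by rewrite !expr2; field.
rewrite lerDl mulr_ge0 //; first exact: exprn_ge0.
by rewrite -realEsqr rpredM ?rpredV ?realn // rpredB ?ger0_real.
Qed.

Section SumOfProjectors.
Variables (T I : finType) (c : I -> I -> C) (bound : C).
Hypotheses (c_ge0 : forall s t, 0 <= c s t) (c_sym : forall s t, c s t = c t s)
  (bound_ge0 : 0 <= bound) (sum_c_le : forall s, \sum_t c s t <= bound).

(* Schur test for the Gram matrix of the [y s], through
   [|<y s, y t>| <= c s t (|y s|^2 + |y t|^2) / 2]. *)
Lemma norm_sum_le_gram (y : I -> T -> C) :
  (forall s t, `|inner (y s) (y t)| ^+ 2 <=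
                c s t ^+ 2 * inner (y s) (y s) * inner (y t) (y t)) ->
  inner (fun x => \sum_s y s x) (fun x => \sum_s y s x) <=
    bound * \sum_s inner (y s) (y s).
Proof.
move=> gram; set N := fun s => inner (y s) (y s).
have N0 s : 0 <= N s by apply: inner_ge0.
rewrite -[X in X <= _]ger0_norm ?inner_ge0 // inner_suml.
under eq_bigr do rewrite inner_sumr.
apply: le_trans (ler_norm_sum _ _ _) _.
apply: le_trans (_ : \sum_s \sum_t c s t * (N s + N t) / 2 <= _).
  apply: ler_sum => s _; apply: le_trans (ler_norm_sum _ _ _) _.
  by apply: ler_sum => t _; apply: normr_le_mean.
have -> : \sum_s \sum_t c s t * (N s + N t) / 2 =
          (\sum_s \sum_t c s t * N s + \sum_s \sum_t c s t * N t) / 2.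
  rewrite mulrDl !mulr_suml -big_split; apply: eq_bigr => s _ /=.
  by rewrite !mulr_suml -big_split; apply: eq_bigr => t _ /=; ring.
have -> : \sum_s \sum_t c s t * N t = \sum_s \sum_t c s t * N s.
  by rewrite exchange_big; apply: eq_bigr => s _; apply: eq_bigr => t _; rewrite c_sym.
rewrite -mulr2n -[_ *+ 2]mulr_natr mulfK ?pnatr_eq0 //.
rewrite mulr_sumr; apply: ler_sum => s _; rewrite -mulr_suml.
by rewrite ler_wpM2r // sum_c_le.
Qed.

Lemma sum_projectors_bound (P : I -> op T) (phi : T -> C) :
  (forall s, projector (P s)) ->
  (forall s t, `|inner (apply_op (P s) phi) (apply_op (P t) phi)| ^+ 2 <=
      c s t ^+ 2 * inner (apply_op (P s) phi) (apply_op (P s) phi) *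
      inner (apply_op (P t) phi) (apply_op (P t) phi)) ->
  \sum_s inner phi (apply_op (P s) phi) <= bound * inner phi phi.
Proof.
move=> prP gram; set S := \sum_s _.
have S_eq : S = inner phi (fun x => \sum_s apply_op (P s) phi x).
  by rewrite inner_sumr.
have S_norms : S = \sum_s inner (apply_op (P s) phi) (apply_op (P s) phi).
  by apply: eq_bigr => s _; rewrite inner_projector.
have S0 : 0 <= S by rewrite S_norms sumr_ge0 // => s _; apply: inner_ge0.
have [->|S_neq0] := eqVneq S 0.
  by rewrite mulr_ge0 ?inner_ge0.
have S_gt0 : 0 < S by rewrite lt_def S_neq0 S0.
rewrite -(ler_pM2r S_gt0).
have := CauchySchwarz phi (fun x => \sum_s apply_op (P s) phi x).
rewrite -S_eq ger0_norm // expr2 => /le_trans; apply.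
rewrite -mulrA mulrCA ler_wpM2l ?inner_ge0 // S_norms.
exact: norm_sum_le_gram.
Qed.

End SumOfProjectors.

End Operators.

Local Open Scope complex_scope.

(** * Conjugate coding *)

Section Qubits.
Variable R : realType.
Local Notation C := R[i].

Definition inv_sqrt2 : C := ((Num.sqrt (2 : R))^-1)%:C.

Lemma inv_sqrt2_ge0 : 0 <= inv_sqrt2.
Proof. by rewrite ler0c invr_ge0 sqrtr_ge0. Qed.

Lemma inv_sqrt2_sqr : inv_sqrt2 * inv_sqrt2 = 2^-1.
Proof.
rewrite /inv_sqrt2 -rmorphM -invfM -expr2 sqr_sqrtr ?ler0n //.
by rewrite fmorphV rmorph_nat.
Qed.

Definition qubit_basis (th e : bool) : bool -> C :=
  if th then ket_hat R e else ket_comp R e.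

Lemma qubit_basis_real th e x : (qubit_basis th e x)^*%R = qubit_basis th e x.
Proof.
rewrite /qubit_basis /ket_hat /ket_comp; case: th; last by rewrite conjC_nat.
rewrite rmorphM /= conj_Creal; last by apply/complex_realP; exists (Num.sqrt (2 : R))^-1.
by case: x; rewrite ?rmorph1 //; case: e; rewrite ?expr1 ?expr0 ?rmorphN rmorph1.
Qed.

Lemma qubit_basis_orthonormal th e e' :
  \sum_x qubit_basis th e x * qubit_basis th e' x = (e == e')%:R.
Proof.
rewrite big_bool /qubit_basis /ket_hat /ket_comp -/inv_sqrt2.
case: th; case: e; case: e' => /=; rewrite ?mulr1 ?mulr0 ?addr0 ?add0r //;
  rewrite ?expr1 ?expr0 ?mulr1 ?mulrN1 ?mulrNN ?mulrN ?mulNr ?mulr1 !inv_sqrt2_sqr;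
  by rewrite ?addNr // -mulr2n -[_ *+ 2]mulr_natr mulVf ?pnatr_eq0.
Qed.

Lemma qubit_basis_unbiased th e f :
  (\sum_x qubit_basis th e x * qubit_basis (~~ th) f x) ^+ 2 = 2^-1.
Proof.
rewrite big_bool /qubit_basis /ket_hat /ket_comp -/inv_sqrt2.
case: th; case: e; case: f => /=; rewrite ?expr1 ?expr0;
  rewrite ?mulr1 ?mulr0 ?mul0r ?addr0 ?add0r ?mulrN1 ?mulN1r ?mul1r;
  by rewrite -?expr2 ?sqrrN expr2 inv_sqrt2_sqr.
Qed.

Definition ket_proj (th e : bool) : op C bool :=
  fun x y => qubit_basis th e x * qubit_basis th e y.

Lemma mul_ket_proj th e e' :
  mul_op (ket_proj th e) (ket_proj th e') = scale_op (e == e')%:R (ket_proj th e).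
Proof.
apply: op_ext => x z; rewrite /mul_op /ket_proj /scale_op.
transitivity (qubit_basis th e x * (\sum_y qubit_basis th e y * qubit_basis th e' y)
              * qubit_basis th e' z).
  by rewrite mulr_sumr mulr_suml; apply: eq_bigr => y _; ring.
by rewrite qubit_basis_orthonormal; case: (eqVneq e e') => [->|_] /=; ring.
Qed.

Lemma ket_proj_idem th e : mul_op (ket_proj th e) (ket_proj th e) = ket_proj th e.
Proof. by rewrite mul_ket_proj eqxx scale_op1. Qed.

Lemma projector_ket_proj th e : projector (ket_proj th e).
Proof.
split; last exact: ket_proj_idem.
by move=> x y; rewrite /ket_proj rmorphM /= !qubit_basis_real mulrC.
Qed.

Lemma ket_proj_sandwich th e f :
  mul_op (ket_proj (~~ th) f) (mul_op (ket_proj th e) (ket_proj (~~ th) f)) =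
  scale_op 2^-1 (ket_proj (~~ th) f).
Proof.
apply: op_ext => x z; rewrite /mul_op /ket_proj /scale_op.
rewrite -(qubit_basis_unbiased th e f) expr2.
set K := \sum_y qubit_basis th e y * qubit_basis (~~ th) f y.
have inner_sum y : \sum_w qubit_basis th e y * qubit_basis th e w *
                     (qubit_basis (~~ th) f w * qubit_basis (~~ th) f z) =
                   qubit_basis th e y * K * qubit_basis (~~ th) f z.
  by rewrite /K mulr_sumr mulr_suml; apply: eq_bigr => w _; ring.
under eq_bigr do rewrite inner_sum.
rewrite !mulr_suml; apply: eq_bigr => y _; ring.
Qed.

Definition pair_proj (th k e : bool) : op C (bool * bool)%type :=
  if k then tensor_op (@id_op C bool) (ket_proj th e)
  else tensor_op (ket_proj th e) (@id_op C bool).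

Definition psi_proj (s r0 r1 : bool) : op C (bool * bool)%type :=
  if s then tensor_op (ket_proj true r1) (ket_proj false r0)
  else tensor_op (ket_proj false r0) (ket_proj true r1).

Lemma projector_pair_proj th k e : projector (pair_proj th k e).
Proof.
by rewrite /pair_proj; case: k; apply: projector_tensor_op;
  (exact: projector_id_op || exact: projector_ket_proj).
Qed.

Lemma psi_proj_rank_one s r0 r1 q q' :
  psi_proj s r0 r1 q q' = psi R s r0 r1 q * psi R s r0 r1 q'.
Proof. by rewrite /psi_proj /psi /tensor_op /ket_proj /qubit_basis; case: s; ring. Qed.

Lemma pair_proj_psi_proj th s r0 r1 :
  mul_op (pair_proj th (s (+) th) (if th then r1 else r0)) (psi_proj s r0 r1) =
  psi_proj s r0 r1.
Proof.
by rewrite /pair_proj /psi_proj; case: th; case: s;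
  rewrite /= mul_tensor_op ?mul1op ?ket_proj_idem.
Qed.

Lemma mul_psi_proj s r0 r1 r0' r1' :
  mul_op (psi_proj s r0 r1) (psi_proj s r0' r1') =
  scale_op ((r0 == r0') && (r1 == r1'))%:R (psi_proj s r0 r1).
Proof.
rewrite /psi_proj natr_andb; case: s;
  by rewrite mul_tensor_op !mul_ket_proj tensor_opZl tensor_opZr scale_opA // mulrC.
Qed.

Definition pair_sandwich (th k e k' f : bool) : op C (bool * bool)%type :=
  if k == k' then pair_proj (~~ th) k' f
  else mul_op (pair_proj (~~ th) k' f) (pair_proj th k e).

(* Measurements in conjugate bases on the same qubit overlap by [1/2];
   on different qubits they commute. *)
Lemma pair_proj_sandwich th k e k' f :
  mul_op (pair_proj (~~ th) k' f) (mul_op (pair_proj th k e) (pair_proj (~~ th) k' f)) =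
    scale_op (if k == k' then 2^-1 else 1) (pair_sandwich th k e k' f) /\
  projector (pair_sandwich th k e k' f).
Proof.
rewrite /pair_sandwich /pair_proj; case: k; case: k' => /=;
  rewrite !mul_tensor_op ?mul1op ?mulop1 ?ket_proj_idem ?ket_proj_sandwich
    ?tensor_opZl ?tensor_opZr ?scale_op1;
  split => //; apply: projector_tensor_op;
  (exact: projector_id_op || exact: projector_ket_proj).
Qed.

Lemma psi_real s r0 r1 q : (psi R s r0 r1 q)^*%R = psi R s r0 r1 q.
Proof.
by rewrite /psi; case: s; rewrite rmorphM /= (qubit_basis_real false) (qubit_basis_real true).
Qed.

Section Strings.
Variable n : nat.

(* Under the basis choice [s], the string [r_th] is encoded on the qubits
   [A_(s j (+) th)^j] in basis [th]; [guess_proj s th e] projects onto the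
   event that it equals [e]. *)
Definition guess_proj (s : bits n) (th : bool) (e : bits n) : op C (Abasis n) :=
  bigtensor_op (fun j => pair_proj th (s j (+) th) (e j)).

Definition Psi_proj (s r0 r1 : bits n) : op C (Abasis n) :=
  bigtensor_op (fun j => psi_proj (s j) (r0 j) (r1 j)).

Definition overlap (s t : bits n) : C := \prod_j (if s j == t j then 1 else inv_sqrt2).

Lemma projector_guess_proj s th e : projector (guess_proj s th e).
Proof. by apply: projector_bigtensor_op => j; apply: projector_pair_proj. Qed.

Lemma Psi_proj_rank_one s r0 r1 a a' :
  Psi_proj s r0 r1 a a' = Psi R s r0 r1 a * Psi R s r0 r1 a'.
Proof.
by rewrite /Psi_proj /bigtensor_op /Psi -big_split; apply: eq_bigr => j _;
  rewrite psi_proj_rank_one.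
Qed.

Lemma Psi_real (s r0 r1 : bits n) a : (Psi R s r0 r1 a)^*%R = Psi R s r0 r1 a.
Proof. by rewrite /Psi rmorph_prod; apply: eq_bigr => j _; exact: psi_real. Qed.

Lemma selfadjoint_Psi_proj (s r0 r1 : bits n) : selfadjoint (Psi_proj s r0 r1).
Proof.
by move=> a a'; rewrite !Psi_proj_rank_one rmorphM /= !Psi_real mulrC.
Qed.

Lemma guess_proj_Psi_proj s th r0 r1 :
  mul_op (guess_proj s th (if th then r1 else r0)) (Psi_proj s r0 r1) = Psi_proj s r0 r1.
Proof.
rewrite /guess_proj /Psi_proj mul_bigtensor_op; congr bigtensor_op.
apply: functional_extensionality => j.
by case: th; [exact: (pair_proj_psi_proj true) | exact: (pair_proj_psi_proj false)].
Qed.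

Lemma mul_Psi_proj s r0 r1 r0' r1' :
  mul_op (Psi_proj s r0 r1) (Psi_proj s r0' r1') =
  scale_op ((r0 == r0') && (r1 == r1'))%:R (Psi_proj s r0 r1).
Proof.
rewrite /Psi_proj mul_bigtensor_op.
under [bigtensor_op _]eq_bigtensor_op do rewrite mul_psi_proj.
rewrite bigtensor_opZ; congr scale_op.
by under eq_bigr do rewrite natr_andb; rewrite big_split /= !prod_natr_eq natr_andb.
Qed.

Lemma overlap_ge0 s t : 0 <= overlap s t.
Proof. by apply: prodr_ge0 => j _; case: ifP => _; rewrite ?ler01 ?inv_sqrt2_ge0. Qed.

Lemma overlapC s t : overlap s t = overlap t s.
Proof. by apply: eq_bigr => j _; rewrite eq_sym. Qed.

Lemma sum_overlap s : \sum_t overlap s t = (1 + inv_sqrt2) ^+ n.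
Proof.
rewrite /overlap -(bigA_distr_bigA (fun j b => if s j == b then 1 else inv_sqrt2)) /=.
rewrite (eq_bigr (fun _ => 1 + inv_sqrt2)) ?prodr_const ?card_ord // => j _.
by rewrite big_bool; case: (s j); rewrite /= addrC.
Qed.

Lemma sqnorm_le_mul_guess_proj s t th e f :
  sqnorm_le (mul_op (guess_proj s th e) (guess_proj t (~~ th) f)) (overlap s t ^+ 2).
Proof.
pose D j := pair_sandwich th (s j (+) th) (e j) (t j (+) ~~ th) (f j).
apply: (@sqnorm_le_mul_projectors _ _ _ _ (bigtensor_op D)).
- exact: projector_guess_proj.
- by case: (projector_guess_proj t (~~ th) f).
- by apply: projector_bigtensor_op => j; case: (pair_proj_sandwich th (s j (+) th) (e j)
    (t j (+) ~~ th) (f j)).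
- by rewrite exprn_ge0 ?overlap_ge0.
rewrite /guess_proj !mul_bigtensor_op.
under [bigtensor_op _]eq_bigtensor_op do rewrite (pair_proj_sandwich _ _ _ _ _).1.
rewrite bigtensor_opZ /overlap -prodrXl; congr scale_op; apply: eq_bigr => j _.
by clear D; case: (s j); case: (t j); case: th; rewrite /= ?expr1n // expr2 inv_sqrt2_sqr.
Qed.

End Strings.

End Qubits.

(** * Cheating strategies *)

Lemma proj_meas_resolution (R : realType) (I T : finType) (P : I -> T -> T -> R[i]) :
  is_proj_meas P -> (forall i, projector (P i)) /\ sum_op P = @id_op _ T.
Proof.
case=> Padj [Pidem Psum]; split; last exact: op_ext.
by move=> i; split; [exact: Padj | apply: op_ext; apply: Pidem].
Qed.

Section Strategy.
Variable R : realType.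
Local Notation C := R[i].
Variables (n dE d0 d1 d' : nat) (chi : 'I_dE -> C)
  (U : 'I_d0 * 'I_d1 * 'I_d' -> Abasis n * 'I_dE -> C)
  (Rm : bool -> 'I_d' -> 'I_d' -> C)
  (Pi0 : bits n -> bool -> bits n -> 'I_d0 -> 'I_d0 -> C)
  (Pi1 : bits n -> bool -> bits n -> 'I_d1 -> 'I_d1 -> C).
Hypotheses (chi_unit : is_unit_vector chi) (U_unitary : is_unitary_op U)
  (Rm_meas : is_proj_meas Rm) (Pi0_meas : forall s b, is_proj_meas (Pi0 s b))
  (Pi1_meas : forall s b, is_proj_meas (Pi1 s b)).

Local Notation Bbasis := ('I_d0 * 'I_d1 * 'I_d')%type.

Let Rm_proj b : projector (Rm b).
Proof. exact: (proj_meas_resolution Rm_meas).1. Qed.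
Let Rm_sum : sum_op Rm = @id_op _ _.
Proof. exact: (proj_meas_resolution Rm_meas).2. Qed.
Let Pi0_proj s b e : projector (Pi0 s b e).
Proof. exact: (proj_meas_resolution (Pi0_meas s b)).1. Qed.
Let Pi0_sum s b : sum_op (Pi0 s b) = @id_op _ _.
Proof. exact: (proj_meas_resolution (Pi0_meas s b)).2. Qed.
Let Pi1_proj s b e : projector (Pi1 s b e).
Proof. exact: (proj_meas_resolution (Pi1_meas s b)).1. Qed.
Let Pi1_sum s b : sum_op (Pi1 s b) = @id_op _ _.
Proof. exact: (proj_meas_resolution (Pi1_meas s b)).2. Qed.

Let mul_Rm b b' : mul_op (Rm b) (Rm b') = scale_op (b == b')%:R (Rm b').
Proof. exact: projector_resolution_orthogonal. Qed.
Let mul_Pi0 s b e e' : mul_op (Pi0 s b e) (Pi0 s b e') = scale_op (e == e')%:R (Pi0 s b e').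
Proof. exact: projector_resolution_orthogonal. Qed.
Let mul_Pi1 s b e e' : mul_op (Pi1 s b e) (Pi1 s b e') = scale_op (e == e')%:R (Pi1 s b e').
Proof. exact: projector_resolution_orthogonal. Qed.

Definition joint_state (x : Abasis n * Bbasis) : C := \sum_e U x.2 (x.1, e) * chi e.

Definition bob_proj (s : bits n) (b : bool) (r0 r1 : bits n) : op C Bbasis :=
  tensor_op (tensor_op (Pi0 s b (if b then r1 else r0)) (Pi1 s b (if b then r0 else r1)))
            (Rm b).

Definition win_term (s : bits n) (i : bits n * bits n * bool) :=
  tensor_op (Psi_proj R s i.1.1 i.1.2) (bob_proj s i.2 i.1.1 i.1.2).

Definition win_proj (s : bits n) := sum_op (win_term s).

(* [check0 s] (resp. [check1 t]) tests only the output of [B0] (resp. [B1])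
   against the matching qubits of [A], so it fixes the range of [win_proj s]
   (resp. [win_proj t]). *)
Definition check0 (s : bits n) (k : bool * bits n) :=
  tensor_op (guess_proj R s k.1 k.2)
            (tensor_op (tensor_op (Pi0 s k.1 k.2) (@id_op C 'I_d1)) (Rm k.1)).

Definition check1 (t : bits n) (k : bool * bits n) :=
  tensor_op (guess_proj R t (~~ k.1) k.2)
            (tensor_op (tensor_op (@id_op C 'I_d0) (Pi1 t k.1 k.2)) (Rm k.1)).

Definition bob_outcome (s t : bits n) (i : bool * bits n * bits n) :=
  tensor_op (tensor_op (Pi0 s i.1.1 i.1.2) (Pi1 t i.1.1 i.2)) (Rm i.1.1).

Lemma mul_win_term s j i :
  mul_op (win_term s j) (win_term s i) = scale_op (j == i)%:R (win_term s i).
Proof.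
case: j => [[r0 r1] b]; case: i => [[r0' r1'] b'].
rewrite /win_term /bob_proj /= !mul_tensor_op mul_Psi_proj !xpair_eqE.
have [<-|r0_neq] := eqVneq r0 r0'; last by rewrite !scale_op0 tensor0op.
have [<-|r1_neq] := eqVneq r1 r1'; last by rewrite !scale_op0 tensor0op.
rewrite /= scale_op1 mul_Rm; have [<-|b_neq] := eqVneq b b'; last first.
  by rewrite !scale_op0 !tensorop0.
by rewrite !scale_op1 !(proj2 (Pi0_proj _ _ _)) !(proj2 (Pi1_proj _ _ _)).
Qed.

Lemma projector_win_proj s : projector (win_proj s).
Proof.
apply: projector_sum_op => [[[r0 r1] b]|]; last exact: mul_win_term.
apply: selfadjoint_tensor_op; first exact: selfadjoint_Psi_proj.
apply: selfadjoint_tensor_op; last by case: (Rm_proj b).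
by apply: selfadjoint_tensor_op;
  [exact: (proj1 (Pi0_proj _ _ _)) | exact: (proj1 (Pi1_proj _ _ _))].
Qed.

Lemma check0_win_proj s : mul_op (sum_op (check0 s)) (win_proj s) = win_proj s.
Proof.
apply: (@mul_sum_op_selector _ _ _ _ _ _ (fun i => (i.2, if i.2 then i.1.2 else i.1.1))).
case=> b e [[r0 r1] b']; rewrite /check0 /win_term /bob_proj /= !mul_tensor_op.
rewrite xpair_eqE mul_Rm; have [<-|b_neq] := eqVneq b b'; last first.
  by rewrite !scale_op0 !tensorop0.
rewrite mul_Pi0 mul1op scale_op1; case: eqVneq => [->|e_neq]; last first.
  by rewrite !scale_op0 !tensor0op tensorop0.
by rewrite !scale_op1 guess_proj_Psi_proj.
Qed.

Lemma check1_win_proj t : mul_op (sum_op (check1 t)) (win_proj t) = win_proj t.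
Proof.
apply: (@mul_sum_op_selector _ _ _ _ _ _ (fun i => (i.2, if i.2 then i.1.1 else i.1.2))).
case=> b f [[r0 r1] b']; rewrite /check1 /win_term /bob_proj /= !mul_tensor_op.
rewrite xpair_eqE mul_Rm; have [<-|b_neq] := eqVneq b b'; last first.
  by rewrite !scale_op0 !tensorop0.
rewrite mul_Pi1 mul1op scale_op1; case: eqVneq => [->|f_neq]; last first.
  by rewrite !scale_op0 tensorop0 tensor0op tensorop0.
have -> : (if b then r0 else r1) = if ~~ b then r1 else r0 by case: b.
by rewrite !scale_op1 guess_proj_Psi_proj.
Qed.

Lemma selfadjoint_check0 s : selfadjoint (sum_op (check0 s)).
Proof.
apply: selfadjoint_sum_op => -[b e]; apply: selfadjoint_tensor_op.
  by case: (projector_guess_proj R s b e).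
apply: selfadjoint_tensor_op; last by case: (Rm_proj b).
by apply: selfadjoint_tensor_op; [case: (Pi0_proj s b e) | exact: selfadjoint_id_op].
Qed.

Lemma mul_check0_check1 s t :
  mul_op (sum_op (check0 s)) (sum_op (check1 t)) =
  sum_op (fun i => tensor_op (mul_op (guess_proj R s i.1.1 i.1.2) (guess_proj R t (~~ i.1.1) i.2))
                             (bob_outcome s t i)).
Proof.
rewrite mul_sum_op; apply: op_ext => x y; rewrite /sum_op !sum_pair.
apply: eq_bigr => b _; apply: eq_bigr => e _; rewrite sum_pair.
rewrite (bigD1 b) //= [X in _ + X]big1 ?addr0 => [|b' b'_neq].
  apply: eq_bigr => f _; rewrite /check0 /check1 /bob_outcome !mul_tensor_op.
  by rewrite mul_Rm eqxx scale_op1 mulop1 mul1op.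
apply: big1 => f _; rewrite /check0 /check1 /= !mul_tensor_op mul_Rm.
by rewrite (eq_sym b) (negPf b'_neq) scale_op0 !tensorop0.
Qed.

Lemma projector_bob_outcome s t i : projector (bob_outcome s t i).
Proof. by apply: projector_tensor_op => //; apply: projector_tensor_op. Qed.

Lemma bob_outcome_resolution s t : sum_op (bob_outcome s t) = @id_op C Bbasis.
Proof.
transitivity (sum_op (fun b => tensor_op (tensor_op (sum_op (Pi0 s b)) (sum_op (Pi1 t b))) (Rm b))).
  apply: op_ext => x y; rewrite /sum_op /bob_outcome /tensor_op !sum_pair.
  apply: eq_bigr => b _ /=; rewrite !mulr_suml; apply: eq_bigr => e _.
  by rewrite mulr_sumr mulr_suml.
under [sum_op _]eq_sum_op do rewrite Pi0_sum Pi1_sum tensor_id_op.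
by rewrite -tensor_sum_opr Rm_sum tensor_id_op.
Qed.

Lemma sqnorm_le_mul_check s t :
  sqnorm_le (mul_op (sum_op (check0 s)) (sum_op (check1 t))) (overlap R s t ^+ 2).
Proof.
rewrite mul_check0_check1; apply: sqnorm_le_block_diagonal.
- by rewrite exprn_ge0 ?overlap_ge0.
- exact: projector_bob_outcome.
- exact: bob_outcome_resolution.
- by move=> i; apply: sqnorm_le_mul_guess_proj.
Qed.

Lemma win_proj_gram_bound s t :
  `|inner (apply_op (win_proj s) joint_state) (apply_op (win_proj t) joint_state)| ^+ 2 <=
    overlap R s t ^+ 2 *
    inner (apply_op (win_proj s) joint_state) (apply_op (win_proj s) joint_state) *
    inner (apply_op (win_proj t) joint_state) (apply_op (win_proj t) joint_state).
Proof.
apply: (inner_fixed_points_bound (selfadjoint_check0 s) _ _ (sqnorm_le_mul_check s t)).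
  by rewrite -apply_mul_op check0_win_proj.
by rewrite -apply_mul_op check1_win_proj.
Qed.

Lemma joint_state_norm : inner joint_state joint_state = #|Abasis n|%:R.
Proof.
rewrite /inner sum_pair -sumr_const; apply: eq_bigr => a _ /=.
transitivity (\sum_e \sum_e' (chi e)^*%R * chi e' * \sum_b (U b (a, e))^*%R * U b (a, e')).
  rewrite /joint_state; under eq_bigr do rewrite rmorph_sum mulr_suml.
  rewrite exchange_big; apply: eq_bigr => e _; under eq_bigr do rewrite mulr_sumr.
  rewrite exchange_big; apply: eq_bigr => e' _; rewrite mulr_sumr.
  by apply: eq_bigr => b _; rewrite rmorphM /=; ring.
under eq_bigr do under eq_bigr do rewrite U_unitary.1 xpair_eqE eqxx /= mulrC.
by under eq_bigr do rewrite sum_delta_r; apply: chi_unit.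
Qed.

Lemma Phi_joint_state s r0 r1 b :
  Phi chi U s r0 r1 b = \sum_a Psi R s r0 r1 a * joint_state (a, b).
Proof.
rewrite /Phi sum_pair; apply: eq_bigr => a _.
by rewrite /joint_state mulr_sumr; apply: eq_bigr => e _ /=; ring.
Qed.

Lemma inner_win_term s r0 r1 b' :
  inner joint_state (apply_op (win_term s (r0, r1, b')) joint_state) =
  \sum_b \sum_c (Phi chi U s r0 r1 b)^*%R * bob_proj s b' r0 r1 b c * Phi chi U s r0 r1 c.
Proof.
have -> : win_term s (r0, r1, b') =
          tensor_op (fun a a' => Psi R s r0 r1 a * Psi R s r0 r1 a') (bob_proj s b' r0 r1).
  by rewrite /win_term; congr tensor_op; apply: op_ext; apply: Psi_proj_rank_one.
rewrite inner_rank_one_tensor; last exact: Psi_real.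
by apply: eq_bigr => b _; apply: eq_bigr => c _; rewrite !Phi_joint_state.
Qed.

Lemma success_prob_win_proj : success_prob chi U Rm Pi0 Pi1 =
  (2 ^+ (3 * n))^-1 * \sum_s inner joint_state (apply_op (win_proj s) joint_state).
Proof.
rewrite /success_prob; congr (_ * _); symmetry.
under eq_bigr do rewrite /win_proj apply_sum_op inner_sumr !sum_pair.
rewrite exchange_big; apply: eq_bigr => r0 _; rewrite exchange_big.
apply: eq_bigr => r1 _; apply: eq_bigr => s _; apply: eq_bigr => b' _.
exact: inner_win_term.
Qed.

End Strategy.

Lemma success_bound_value (R : realType) (n : nat) :
  (2 ^+ (3 * n))^-1 * ((1 + inv_sqrt2 R) ^+ n * #|Abasis n|%:R) =
  ((1 / 2 + 1 / (2 * Num.sqrt (2 : R))) ^+ n)%:C.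
Proof.
rewrite card_ffun card_prod card_bool card_ord natrX exprM -exprVn -!exprMn rmorphXn.
congr (_ ^+ n).
have sqrt2_neq0 : Num.sqrt (2 : R) != 0 by rewrite sqrtr_eq0 -ltNge ltr0n.
have -> : 1 / 2 + 1 / (2 * Num.sqrt (2 : R)) = (1 + (Num.sqrt (2 : R))^-1) / 2 by field.
rewrite /inv_sqrt2 rmorphM rmorphD rmorph1 !fmorphV rmorph_nat natrM.
by field; rewrite fmorph_eq0.
Qed.

Unset Implicit Arguments.

Theorem mainTheorem1 (R : realType) (n : nat) (hn : (0 < n)%N)
  (dE d0 d1 d' : nat) (chi : 'I_dE -> R[i])
  (U : 'I_d0 * 'I_d1 * 'I_d' -> Abasis n * 'I_dE -> R[i])
  (Rm : bool -> 'I_d' -> 'I_d' -> R[i])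
  (Pi0 : bits n -> bool -> bits n -> 'I_d0 -> 'I_d0 -> R[i])
  (Pi1 : bits n -> bool -> bits n -> 'I_d1 -> 'I_d1 -> R[i]) :
  is_unit_vector chi ->
  is_unitary_op U ->
  is_proj_meas Rm ->
  (forall s b', is_proj_meas (Pi0 s b')) ->
  (forall s b', is_proj_meas (Pi1 s b')) ->
  success_prob chi U Rm Pi0 Pi1
    <= ((1 / 2 + 1 / (2 * Num.sqrt (2 : R))) ^+ n)%:C.
Proof.
(* The bound also holds for [n = 0] (both sides are [1]). *)
move=> chi_unit U_unitary Rm_meas Pi0_meas Pi1_meas.
have bound_ge0 : 0 <= (1 + inv_sqrt2 R) ^+ n.
  by rewrite exprn_ge0 // addr_ge0 ?inv_sqrt2_ge0.
have sum_overlap_le (s : bits n) : \sum_t overlap R s t <= (1 + inv_sqrt2 R) ^+ n.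
  by rewrite sum_overlap.
rewrite success_prob_win_proj -success_bound_value -(joint_state_norm chi_unit U_unitary).
apply: ler_wpM2l; first by rewrite invr_ge0 exprn_ge0 ?ler0n.
exact: (sum_projectors_bound (@overlap_ge0 R n) (@overlapC R n) bound_ge0 sum_overlap_le
  (projector_win_proj Rm_meas Pi0_meas Pi1_meas)
  (win_proj_gram_bound chi U Rm_meas Pi0_meas Pi1_meas)).
Qed.
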